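(* Consider a one-site PTM cascade with $n\ge1$ layers and positive total amounts. With $r=r_1/r_2$ as defined in the context, the BMSS value of $S_n^1$ is the smallest positive real root of the polynomial $P(s)=r_2(s)\,\overline{E}-r_1(s)$.
   Context: A one-site PTM cascade with $n$ layers has species $E=S_0^1$ and, for $i=1,\dots,n$, $S_i^0,S_i^1,F_i,Y_i^0,Y_i^1$, with reactions $S_{i-1}^1+S_i^0 \rightleftharpoons Y_i^0 \to S_{i-1}^1+S_i^1$ (rate constants $a_i^0,b_i^0,c_i^0$) and $F_i+S_i^1\rightleftharpoons Y_i^1\to F_i+S_i^0$ (rate constants $a_i^1,b_i^1,c_i^1$), all positive, mass-action kinetics. Put $\delta_i=a_i^1/(b_i^1+c_i^1)$, $\gamma_i=(c_i^1/c_i^0)\delta_i$, $\lambda_i=\frac{b_i^0+c_i^0}{a_i^0}\gamma_i$. Given total amounts $\overline{E},\overline{F}_i,\overline{S}_i$, a steady state is a real solution of: $Y_i^0=\gamma_iF_iS_i^1$, $Y_i^1=\delta_iF_iS_i^1$, $\lambda_iF_iS_i^1=S_i^0S_{i-1}^1$, $\overline{F}_i=F_i+Y_i^1$, $\overline{S}_i=S_i^0+S_i^1+Y_i^0+Y_i^1+Y_{i+1}^0$ ($i=1,\dots,n$, $Y_{n+1}^0:=0$), $\overline{E}=E+Y_1^0$. A BMSS is a steady state with positive total amounts and all concentrations nonnegative; it exists and is unique. Define $d_i(x,y)=(\overline{S}_i-y)-x-\overline{F}_i(\delta_i+\gamma_i)x+\delta_i(\overline{S}_i-y)x-\delta_ix^2$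 and $g_i^Y(x)=\frac{\gamma_i\overline{F}_ix}{1+\delta_ix}$; define rational functions of $s$ recursively by $f_n(s)=s$, $f_{n+1}^Y(s)=0$, and for $i=n,\dots,1$: $f_i^Y(s)=g_i^Y(f_i(s))$, $f_{i-1}(s)=\frac{\lambda_i\overline{F}_if_i(s)}{d_i(f_i(s),f_{i+1}^Y(s))}$. Let $r(s)=f_0(s)+f_1^Y(s)$ and write $r=r_1/r_2$ in reduced form with $r_1,r_2\in\mathbb{R}[s]$. *)

From HB Require Import structures.
From mathcomp Require Import all_boot all_order all_algebra.
From mathcomp Require Import fraction.
Set Implicit Arguments. Unset Strict Implicit. Unset Printing Implicit Defensive.
Import Order.TTheory GRing.Theory Num.Theory.
Local Open Scope ring_scope.

Notation "x %:F" := (@FracField.tofrac _ x).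

Section PTM.
Variable R : rcfType.
(* rate constants, indexed by layer i = 1..n (values at other indices unused) *)
Variables (a0 b0 c0 a1 b1 c1 : nat -> R).

Definition delta (i : nat) : R := a1 i / (b1 i + c1 i).
Definition gamma (i : nat) : R := (c1 i / c0 i) * delta i.
Definition lambda (i : nat) : R := (b0 i + c0 i) / a0 i * gamma i.

(* Steady-state system of the paper; E = S1 0 (= S_0^1), Y_{n+1}^0 := 0. *)
Definition steady_state (n : nat) (Ebar : R) (Fbar Sbar : nat -> R)
  (S0 S1 F Y0 Y1 : nat -> R) : Prop :=
  (forall i, (1 <= i <= n)%N ->
     [/\ Y0 i = gamma i * F i * S1 i,
         Y1 i = delta i * F i * S1 i,
         lambda i * F i * S1 i = S0 i * S1 i.-1,
         Fbar i = F i + Y1 i &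
         Sbar i = S0 i + S1 i + Y0 i + Y1 i + (if i == n then 0 else Y0 i.+1)])
  /\ Ebar = S1 0 + Y0 1.

(* BMSS: steady state with all concentrations nonnegative
   (positivity of the total amounts is assumed separately). *)
Definition BMSS (n : nat) (Ebar : R) (Fbar Sbar : nat -> R)
  (S0 S1 F Y0 Y1 : nat -> R) : Prop :=
  steady_state n Ebar Fbar Sbar S0 S1 F Y0 Y1 /\
  0 <= S1 0 /\
  (forall i, (1 <= i <= n)%N ->
     [/\ 0 <= S0 i, 0 <= S1 i, 0 <= F i, 0 <= Y0 i & 0 <= Y1 i]).

Local Notation RF := {fraction {poly R}}.
Definition cst (c : R) : RF := (c%:P)%:F.

Definition dfun (Fbar Sbar : nat -> R) (i : nat) (x y : RF) : RF :=
  (cst (Sbar i) - y) - x - cst (Fbar i * (delta i + gamma i)) * x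
  + cst (delta i) * (cst (Sbar i) - y) * x - cst (delta i) * x ^+ 2.

Definition gY (Fbar : nat -> R) (i : nat) (x : RF) : RF :=
  cst (gamma i * Fbar i) * x / (1 + cst (delta i) * x).

(* fpair n Fbar Sbar j = (f_{n-j}, f^Y_{n-j+1}) *)
Fixpoint fpair (n : nat) (Fbar Sbar : nat -> R) (j : nat) : RF * RF :=
  match j with
  | O => (('X : {poly R})%:F, 0)
  | j'.+1 =>
      let i := (n - j')%N in
      let x := (fpair n Fbar Sbar j').1 in
      let y := (fpair n Fbar Sbar j').2 in
      (cst (lambda i * Fbar i) * x / dfun Fbar Sbar i x y, gY Fbar i x)
  end.

Definition rfun (n : nat) (Fbar Sbar : nat -> R) : RF :=
  (fpair n Fbar Sbar n).1 + (fpair n Fbar Sbar n).2.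

End PTM.

(* At the BMSS every S_i^1 and S_i^0 is positive, and running the recursion
   for r at s = S_n^1 reproduces the steady state layer by layer
   (f_i(s) = S_i^1, f_i^Y(s) = Y_i^0), so r(S_n^1) = S_0^1 + Y_1^0 = Ebar.
   Each step of the recursion is increasing in f_i and nondecreasing in
   f_{i+1}^Y, so for 0 < s < S_n^1 one gets f_i(s) < S_i^1 and
   f_{i+1}^Y(s) <= Y_{i+1}^0 all the way down, whence r(s) < Ebar.  Wherever
   the recursion is defined, coprimality of r1 and r2 gives r2(s) <> 0 and
   P(s) = r2(s) (Ebar - r(s)); hence S_n^1 is the least positive root of P. *)

From HB Require Import structures.
From mathcomp Require Import all_boot all_order all_algebra.
From mathcomp Require Import fraction ring lra.
Import Order.TTheory GRing.Theory Num.Theory.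
Set Implicit Arguments. Unset Strict Implicit. Unset Printing Implicit Defensive.
Local Open Scope ring_scope.

Section FracEval.
Variable F : fieldType.
Implicit Types (p u w : {poly F}) (q : {fraction {poly F}}) (x v : F).

(* [q] has no pole at [x] and takes the value [v] there. *)
Definition frac_eval q x v := exists u w,
  [/\ w.[x] != 0, q * w%:F = u%:F & u.[x] = v * w.[x]].

Lemma frac_eval_poly p x : frac_eval p%:F x p.[x].
Proof. by exists p, 1; rewrite !hornerE oner_neq0. Qed.

Lemma frac_eval_polyC c x : frac_eval (c%:P)%:F x c.
Proof. by have := frac_eval_poly c%:P x; rewrite hornerC. Qed.

Lemma frac_eval_1 x : frac_eval 1 x 1.
Proof. by have := frac_eval_polyC 1 x; rewrite rmorph1. Qed.

Lemma frac_eval_add q1 q2 x v1 v2 :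
  frac_eval q1 x v1 -> frac_eval q2 x v2 -> frac_eval (q1 + q2) x (v1 + v2).
Proof.
move=> [u1 [w1 [w1x0 e1 u1x]]] [u2 [w2 [w2x0 e2 u2x]]].
exists (u1 * w2 + u2 * w1), (w1 * w2); split.
- by rewrite hornerM mulf_neq0.
- by rewrite tofracD !tofracM -e1 -e2; ring.
- by rewrite hornerD !hornerM u1x u2x; ring.
Qed.

Lemma frac_eval_mul q1 q2 x v1 v2 :
  frac_eval q1 x v1 -> frac_eval q2 x v2 -> frac_eval (q1 * q2) x (v1 * v2).
Proof.
move=> [u1 [w1 [w1x0 e1 u1x]]] [u2 [w2 [w2x0 e2 u2x]]].
exists (u1 * u2), (w1 * w2); split.
- by rewrite hornerM mulf_neq0.
- by rewrite !tofracM -e1 -e2; ring.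
- by rewrite !hornerM u1x u2x; ring.
Qed.

Lemma frac_eval_opp q x v : frac_eval q x v -> frac_eval (- q) x (- v).
Proof.
move=> [u [w [wx0 e ux]]]; exists (- u), w.
by rewrite tofracN -e mulNr hornerN ux mulNr.
Qed.

Lemma frac_eval_inv q x v : v != 0 -> frac_eval q x v -> frac_eval q^-1 x v^-1.
Proof.
move=> v0 [u [w [wx0 e ux]]].
have ux0 : u.[x] != 0 by rewrite ux mulf_neq0.
have q0 : q != 0.
  apply: contra ux0 => /eqP q0; move: e; rewrite q0 mul0r => /esym/eqP.
  by rewrite tofrac_eq0 => /eqP ->; rewrite horner0.
by exists w, u; split; rewrite // -?e ?ux mulKf.
Qed.

Lemma frac_eval_div q1 q2 x v1 v2 : v2 != 0 ->
  frac_eval q1 x v1 -> frac_eval q2 x v2 -> frac_eval (q1 / q2) x (v1 / v2).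
Proof. by move=> v20 e1 e2; apply/frac_eval_mul/frac_eval_inv. Qed.

Lemma frac_eval_coprime r1 r2 x v : r2 != 0 -> coprimep r1 r2 ->
  frac_eval (r1%:F / r2%:F) x v -> r2.[x] != 0 /\ r1.[x] = v * r2.[x].
Proof.
move=> r20 cop [u [w [wx0 e ux]]].
have r1w : r1 * w = u * r2.
  apply/eqP; rewrite -tofrac_eq !tofracM -e mulrAC divfK //.
  by rewrite tofrac_eq0.
have r1x : r1.[x] = v * r2.[x].
  by apply: (mulIf wx0); rewrite -hornerM r1w hornerM ux; ring.
split=> //; apply/negP => /eqP r2x.
have := coprimep_root cop (x := x).
by rewrite /root r1x r2x mulr0 eqxx => /(_ isT).
Qed.

End FracEval.

Section Layer.
Variable R : realFieldType.
Variables (d g l Fb Sb : R).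
Hypotheses (d_gt0 : 0 < d) (g_gt0 : 0 < g) (l_gt0 : 0 < l) (Fb_gt0 : 0 < Fb).
Implicit Types x y F S Y : R.

Definition saturation (x : R) : R := x / (1 + d * x).

Definition layer_d (x y : R) : R :=
  (Sb - y) - x - Fb * (d + g) * x + d * (Sb - y) * x - d * x ^+ 2.
Definition layer_g (x : R) : R := g * Fb * x / (1 + d * x).
Definition layer_up (x y : R) : R := l * Fb * x / layer_d x y.
Definition layer_S0 (x y : R) : R := Sb - y - x - (d + g) * Fb * saturation x.

Lemma saturation_den_gt0 x : 0 <= x -> 0 < 1 + d * x.
Proof. by move=> x_ge0; apply: ltr_wpDr; rewrite ?mulr_ge0 ?ltr01 // ltW. Qed.

Lemma saturation_gt0 x : 0 < x -> 0 < saturation x.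
Proof. by move=> x_gt0; rewrite divr_gt0 ?saturation_den_gt0 ?ltW. Qed.

Lemma saturation_lt x y : 0 <= x -> x < y -> saturation x < saturation y.
Proof.
move=> x_ge0 xy; have y_ge0 : 0 <= y by rewrite ltW ?(le_lt_trans x_ge0).
rewrite /saturation ltr_pdivrMr ?saturation_den_gt0 // mulrAC.
rewrite ltr_pdivlMr ?saturation_den_gt0 //; nra.
Qed.

Lemma layer_gE x : layer_g x = g * Fb * saturation x.
Proof. by rewrite /layer_g /saturation mulrA. Qed.

Lemma layer_dE x y : 0 <= x -> layer_d x y = (1 + d * x) * layer_S0 x y.
Proof.
move=> /saturation_den_gt0/lt0r_neq0 dx0.
by rewrite /layer_d /layer_S0 /saturation; field.
Qed.

Lemma layer_upE x y : 0 <= x -> layer_S0 x y != 0 ->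
  layer_up x y = l * Fb * saturation x / layer_S0 x y.
Proof.
move=> x_ge0 S0_neq0; have dx0 := lt0r_neq0 (saturation_den_gt0 x_ge0).
by rewrite /layer_up layer_dE // /saturation; field; rewrite dx0 S0_neq0.
Qed.

Lemma layer_steady F S0 x x' Y0 Y1 y : 0 <= x -> 0 < S0 ->
  Y0 = g * F * x -> Y1 = d * F * x -> Fb = F + Y1 ->
  Sb = S0 + x + Y0 + Y1 + y -> l * F * x = S0 * x' ->
  [/\ layer_g x = Y0, layer_S0 x y = S0, 0 < layer_d x y & layer_up x y = x'].
Proof.
move=> x_ge0 S0_gt0 eY0 eY1 eFb eSb ex'.
have dx_gt0 := saturation_den_gt0 x_ge0; have dx0 := lt0r_neq0 dx_gt0.
have FbE : Fb = F * (1 + d * x) by rewrite eFb eY1; ring.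
have eS0 : layer_S0 x y = S0.
  by rewrite /layer_S0 /saturation eSb eY0 eY1 FbE; field.
split=> //.
- by rewrite /layer_g eY0 FbE; field.
- by rewrite layer_dE // eS0 mulr_gt0.
- rewrite layer_upE // ?eS0 ?lt0r_neq0 // /saturation FbE.
  rewrite -[x' in RHS](mulKf (lt0r_neq0 S0_gt0)) -ex'.
  by field; rewrite dx0 lt0r_neq0.
Qed.

Lemma layer_below x0 y0 x y : 0 < x0 -> x0 < x -> 0 <= y0 -> y0 <= y ->
  0 < layer_S0 x y ->
  [/\ 0 < layer_d x0 y0, 0 < layer_up x0 y0, layer_up x0 y0 < layer_up x y,
      0 <= layer_g x0 & layer_g x0 <= layer_g x].
Proof.
move=> x0_gt0 x0x y0_ge0 y0y S0_gt0.
have x0_ge0 := ltW x0_gt0; have x_ge0 := ltW (lt_trans x0_gt0 x0x).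
have sat_lt := saturation_lt x0_ge0 x0x; have sat_gt0 := saturation_gt0 x0_gt0.
have dgFb_gt0 : 0 < (d + g) * Fb by rewrite mulr_gt0 ?addr_gt0.
have S0_lt : layer_S0 x y < layer_S0 x0 y0.
  by rewrite /layer_S0; apply: ler_ltB; [lra | rewrite ltr_pM2l].
have S00_gt0 := lt_trans S0_gt0 S0_lt.
have lFb_gt0 : 0 < l * Fb by rewrite mulr_gt0.
have gFb_gt0 : 0 < g * Fb by rewrite mulr_gt0.
split.
- by rewrite layer_dE // mulr_gt0 ?saturation_den_gt0.
- by rewrite layer_upE ?lt0r_neq0 //; apply/divr_gt0/S00_gt0/mulr_gt0.
- rewrite !layer_upE ?lt0r_neq0 //.
  apply: (@lt_le_trans _ _ (l * Fb * saturation x / layer_S0 x0 y0)).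
    by rewrite ltr_pM2r ?invr_gt0 // ltr_pM2l.
  rewrite ler_pM2l; last exact: mulr_gt0 lFb_gt0 (lt_trans sat_gt0 sat_lt).
  by rewrite lef_pV2 ?posrE // ltW.
- by rewrite layer_gE mulr_ge0 ?ltW.
- by rewrite !layer_gE ler_pM2l // ltW.
Qed.

End Layer.

Section Recursion.
Variable R : rcfType.
Variables (a0 b0 c0 a1 b1 c1 Fbar Sbar : nat -> R) (n : nat).
Local Notation del := (delta a1 b1 c1).
Local Notation gam := (gamma c0 a1 b1 c1).
Local Notation lam := (lambda a0 b0 c0 a1 b1 c1).
Local Notation d_ i := (layer_d (del i) (gam i) (Fbar i) (Sbar i)).
Local Notation gY_ i := (layer_g (del i) (gam i) (Fbar i)).
Local Notation up_ i := (layer_up (del i) (gam i) (lam i) (Fbar i) (Sbar i)).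
Local Notation fpair := (fpair a0 b0 c0 a1 b1 c1 n Fbar Sbar).

(* [fval s j] is (f_{n-j}(s), f_{n-j+1}^Y(s)), computed in R alongside [fpair]. *)
Fixpoint fval (s : R) (j : nat) : R * R :=
  if j is j'.+1 then
    let i := (n - j')%N in (up_ i (fval s j').1 (fval s j').2, gY_ i (fval s j').1)
  else (s, 0).

Definition rval (s : R) : R := (fval s n).1 + (fval s n).2.

Definition fval_defined (s : R) (j : nat) : Prop := forall k, (k < j)%N ->
  1 + del (n - k) * (fval s k).1 != 0 /\ d_ (n - k) (fval s k).1 (fval s k).2 != 0.

Lemma fval_definedS s j : fval_defined s j ->
  1 + del (n - j) * (fval s j).1 != 0 -> d_ (n - j) (fval s j).1 (fval s j).2 != 0 ->
  fval_defined s j.+1.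
Proof.
by move=> def den1 den2 k; rewrite ltnS leq_eqVlt => /orP[/eqP -> // | /def].
Qed.

Ltac frac_eval_arith := repeat first
  [ apply: frac_eval_add | apply: frac_eval_opp | apply: frac_eval_mul
  | apply: frac_eval_polyC | apply: frac_eval_1 | eassumption ].

Lemma frac_eval_fpair s j : fval_defined s j ->
  frac_eval (fpair j).1 s (fval s j).1 /\ frac_eval (fpair j).2 s (fval s j).2.
Proof.
elim: j => [|j IH] def /=.
  by split; [have := frac_eval_poly 'X s; rewrite hornerX
            | have := frac_eval_polyC 0 s; rewrite rmorph0].
have [den1 den2] := def j (ltnSn j).
have [ex ey] : frac_eval (fpair j).1 s (fval s j).1 /\ frac_eval (fpair j).2 s (fval s j).2.
  by apply: IH => k /ltnW; apply: def.
split; apply: frac_eval_div => //; rewrite /dfun /layer_d ?expr2; frac_eval_arith.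
Qed.

Lemma rfun_reduced_eval (r1 r2 : {poly R}) (Ebar s : R) :
  fval_defined s n -> r2 != 0 -> coprimep r1 r2 ->
  rfun a0 b0 c0 a1 b1 c1 n Fbar Sbar = r1%:F / r2%:F ->
  r2.[s] != 0 /\ (r2 * Ebar%:P - r1).[s] = r2.[s] * (Ebar - rval s).
Proof.
move=> def r2_neq0 cop rE; have [ex ey] := frac_eval_fpair def.
have := frac_eval_add ex ey; rewrite -/(rfun a0 b0 c0 a1 b1 c1 n Fbar Sbar) rE.
move=> /(frac_eval_coprime r2_neq0 cop) [r2s_neq0 r1s].
by split=> //; rewrite hornerD hornerN hornerM hornerC r1s /rval; ring.
Qed.

End Recursion.

Section Cascade.
Variable R : rcfType.
Variables (a0 b0 c0 a1 b1 c1 : nat -> R) (Ebar : R) (Fbar Sbar : nat -> R).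
Variables (S0 S1 F Y0 Y1 : nat -> R) (n : nat).
Hypothesis n_gt0 : (0 < n)%N.
Hypothesis rates_gt0 : forall i, (1 <= i <= n)%N ->
  [/\ 0 < a0 i, 0 < b0 i & 0 < c0 i] /\ [/\ 0 < a1 i, 0 < b1 i & 0 < c1 i].
Hypothesis Ebar_gt0 : 0 < Ebar.
Hypothesis totals_gt0 : forall i, (1 <= i <= n)%N -> 0 < Fbar i /\ 0 < Sbar i.
Hypothesis bmss : BMSS a0 b0 c0 a1 b1 c1 n Ebar Fbar Sbar S0 S1 F Y0 Y1.

Local Notation del := (delta a1 b1 c1).
Local Notation gam := (gamma c0 a1 b1 c1).
Local Notation lam := (lambda a0 b0 c0 a1 b1 c1).
Local Notation fval := (fval a0 b0 c0 a1 b1 c1 Fbar Sbar n).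
Local Notation fval_defined := (fval_defined a0 b0 c0 a1 b1 c1 Fbar Sbar n).
Local Notation rval := (rval a0 b0 c0 a1 b1 c1 Fbar Sbar n).

Definition Y0next (i : nat) : R := if i == n then 0 else Y0 i.+1.

Lemma steady_layer i : (1 <= i <= n)%N ->
  [/\ Y0 i = gam i * F i * S1 i, Y1 i = del i * F i * S1 i,
      lam i * F i * S1 i = S0 i * S1 i.-1, Fbar i = F i + Y1 i &
      Sbar i = S0 i + S1 i + Y0 i + Y1 i + Y0next i].
Proof. by case: bmss => [[steady _] _]; apply: steady. Qed.

Lemma Ebar_steady : Ebar = S1 0 + Y0next 0.
Proof. by case: bmss => [[_ ->] _]; rewrite /Y0next eq_sym gtn_eqF. Qed.

Lemma layer_consts_gt0 i : (1 <= i <= n)%N -> [/\ 0 < del i, 0 < gam i & 0 < lam i].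
Proof.
move=> /rates_gt0 [[a0_gt0 b0_gt0 c0_gt0] [a1_gt0 b1_gt0 c1_gt0]].
have del_gt0 : 0 < del i by rewrite /delta divr_gt0 ?addr_gt0.
have gam_gt0 : 0 < gam i by rewrite /gamma mulr_gt0 // divr_gt0.
by split=> //; rewrite /lambda mulr_gt0 // divr_gt0 // addr_gt0.
Qed.

Lemma F_gt0 i : (1 <= i <= n)%N -> 0 < F i.
Proof.
move=> i_in; have [_ _ F_ge0 _ _] := bmss.2.2 i i_in.
have [_ Y1E _ FbarE _] := steady_layer i_in.
rewrite lt_def F_ge0 andbT; apply: contraTneq (totals_gt0 i_in).1 => F0.
by rewrite FbarE Y1E F0 !mulr0 mul0r addr0 ltxx.
Qed.

Lemma lam_F_neq0 i : (1 <= i <= n)%N -> lam i * F i != 0.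
Proof.
move=> i_in; have [_ _ lam_gt0] := layer_consts_gt0 i_in.
by rewrite mulf_neq0 ?lt0r_neq0 ?F_gt0.
Qed.

Lemma S1_succ_eq0 i : (i < n)%N -> S1 i = 0 -> S1 i.+1 = 0.
Proof.
move=> i_lt S1i0; have i_in : (1 <= i.+1 <= n)%N by [].
have [_ _ eq_up _ _] := steady_layer i_in.
move: eq_up; rewrite /= S1i0 mulr0 => /eqP.
by rewrite mulf_eq0 (negbTE (lam_F_neq0 i_in)) => /eqP.
Qed.

Lemma S1_eq0_n i : (i <= n)%N -> S1 i = 0 -> S1 n = 0.
Proof.
move=> /subnKC; move: (n - i)%N => t; elim: t i => [|t IH] i tE S1i0.
  by rewrite -tE addn0.
apply: (IH i.+1); first by rewrite addSnnS.
by apply: S1_succ_eq0; rewrite // -tE addnS ltnS leq_addr.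
Qed.

Lemma layer_index j : (j < n)%N ->
  [/\ (1 <= n - j <= n)%N, (n - j.+1 = (n - j).-1)%N & Y0next (n - j.+1) = Y0 (n - j)].
Proof.
move=> j_lt; have i_gt0 : (0 < n - j)%N by rewrite subn_gt0.
have pred_lt : ((n - j).-1 < n)%N by rewrite (leq_trans _ (leq_subr j n)) // ltn_predL.
by rewrite subnS i_gt0 leq_subr /Y0next (ltn_eqF pred_lt) prednK.
Qed.

(* Downward, a vanishing S_i^1 forces S_i^0 = Sbar_i > 0, hence S_{i-1}^1 = 0. *)
Lemma S1_eq0_down : S1 n = 0 ->
  forall t, (t <= n)%N -> S1 (n - t) = 0 /\ Y0next (n - t) = 0.
Proof.
move=> S1n0; elim=> [|t IH] t_le; first by rewrite subn0 /Y0next eqxx.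
have [S1i0 Ynext0] := IH (ltnW t_le).
have [i_in predE YnextE] := layer_index t_le.
have [Y0E Y1E eq_up _ SbarE] := steady_layer i_in.
have S0E : S0 (n - t) = Sbar (n - t) by rewrite SbarE Ynext0 Y0E Y1E S1i0 !mulr0 !addr0.
have S1pred0 : S1 (n - t).-1 = 0.
  move: eq_up; rewrite S1i0 mulr0 S0E => /esym/eqP.
  by rewrite mulf_eq0 (negbTE (lt0r_neq0 (totals_gt0 i_in).2)) => /eqP.
by rewrite YnextE predE S1pred0 Y0E S1i0 mulr0.
Qed.

Lemma S1_gt0 i : (i <= n)%N -> 0 < S1 i.
Proof.
move=> i_le; have S1n_neq0 : S1 n != 0.
  apply/eqP => /S1_eq0_down /(_ n (leqnn n)); rewrite subnn => -[S10 Ynext0].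
  by move: Ebar_gt0; rewrite Ebar_steady S10 Ynext0 addr0 ltxx.
have S1_ge0 : 0 <= S1 i.
  by case: i i_le => [|i] i_le; [case: bmss => _ [] | have [] := bmss.2.2 i.+1 i_le].
by rewrite lt_def S1_ge0 andbT; apply: contra_neq S1n_neq0; apply: S1_eq0_n.
Qed.

Lemma S0_gt0 i : (1 <= i <= n)%N -> 0 < S0 i.
Proof.
move=> i_in; have [S0_ge0 _ _ _ _] := bmss.2.2 i i_in.
have [_ _ eq_up _ _] := steady_layer i_in.
rewrite lt_def S0_ge0 andbT; apply: contraTneq (S1_gt0 (andP i_in).2) => S00.
move: eq_up; rewrite S00 mul0r => /eqP.
by rewrite mulf_eq0 (negbTE (lam_F_neq0 i_in)) => /eqP ->; rewrite ltxx.
Qed.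

Lemma fval_steady j : (j <= n)%N ->
  fval (S1 n) j = (S1 (n - j), Y0next (n - j)) /\ fval_defined (S1 n) j.
Proof.
elim: j => [|j IH] j_le; first by rewrite subn0 /Y0next eqxx; split=> // k.
have [fvalE def] := IH (ltnW j_le).
have [i_in predE YnextE] := layer_index j_le.
have [Y0E Y1E eq_up FbarE SbarE] := steady_layer i_in.
have [del_gt0 _ _] := layer_consts_gt0 i_in.
have S1_ge0 := ltW (S1_gt0 (andP i_in).2).
have [gE _ d_gt0 upE] := layer_steady del_gt0 S1_ge0 (S0_gt0 i_in)
  Y0E Y1E FbarE SbarE eq_up.
rewrite /= fvalE /= gE upE YnextE predE; split=> //.
by apply: fval_definedS def _ _; rewrite fvalE lt0r_neq0 ?saturation_den_gt0.
Qed.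

Lemma fval_below s j : 0 < s -> s < S1 n -> (j <= n)%N ->
  [/\ 0 < (fval s j).1, (fval s j).1 < S1 (n - j), 0 <= (fval s j).2,
      (fval s j).2 <= Y0next (n - j) & fval_defined s j].
Proof.
move=> s_gt0 s_lt; elim: j => [|j IH] j_le; first by rewrite subn0 /Y0next eqxx.
have [x_gt0 x_lt y_ge0 y_le def] := IH (ltnW j_le).
have [i_in predE YnextE] := layer_index j_le.
have [Y0E Y1E eq_up FbarE SbarE] := steady_layer i_in.
have [del_gt0 gam_gt0 lam_gt0] := layer_consts_gt0 i_in.
have S1_ge0 := ltW (S1_gt0 (andP i_in).2).
have [gE S0E _ upE] := layer_steady del_gt0 S1_ge0 (S0_gt0 i_in)
  Y0E Y1E FbarE SbarE eq_up.
have S0_pos := S0_gt0 i_in; rewrite -S0E in S0_pos.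
have [d_gt0 up_gt0 up_lt g_ge0 g_le] := layer_below del_gt0 gam_gt0 lam_gt0
  (totals_gt0 i_in).1 x_gt0 x_lt y_ge0 y_le S0_pos.
rewrite /= YnextE predE -upE -gE; split=> //.
by apply: fval_definedS def _ _; rewrite lt0r_neq0 ?saturation_den_gt0 ?ltW.
Qed.

Lemma rval_steady : fval_defined (S1 n) n /\ rval (S1 n) = Ebar.
Proof.
have [fvalE def] := fval_steady (leqnn n).
by rewrite /rval fvalE Ebar_steady subnn.
Qed.

Lemma rval_below s : 0 < s -> s < S1 n -> fval_defined s n /\ rval s < Ebar.
Proof.
move=> s_gt0 s_lt; have [_ x_lt _ y_le def] := fval_below s_gt0 s_lt (leqnn n).
rewrite subnn in x_lt y_le.
by split=> //; rewrite /rval Ebar_steady; apply: ltr_leD.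
Qed.

End Cascade.

Theorem mainTheorem10 (R : rcfType) (n : nat) (a0 b0 c0 a1 b1 c1 : nat -> R)
  (Ebar : R) (Fbar Sbar : nat -> R)
  (S0 S1 F Y0 Y1 : nat -> R) (r1 r2 : {poly R}) :
  (1 <= n)%N ->
  (forall i, (1 <= i <= n)%N ->
     [/\ 0 < a0 i, 0 < b0 i & 0 < c0 i] /\ [/\ 0 < a1 i, 0 < b1 i & 0 < c1 i]) ->
  0 < Ebar ->
  (forall i, (1 <= i <= n)%N -> 0 < Fbar i /\ 0 < Sbar i) ->
  BMSS a0 b0 c0 a1 b1 c1 n Ebar Fbar Sbar S0 S1 F Y0 Y1 ->
  r2 != 0 -> coprimep r1 r2 ->
  rfun a0 b0 c0 a1 b1 c1 n Fbar Sbar = r1%:F / r2%:F ->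
  let P := r2 * Ebar%:P - r1 in
  [/\ 0 < S1 n, root P (S1 n) &
      forall s : R, 0 < s -> root P s -> S1 n <= s].
Proof.
move=> n_gt0 rates_gt0 Ebar_gt0 totals_gt0 bmss r2_neq0 cop rE P.
split.
- exact: S1_gt0 n_gt0 rates_gt0 Ebar_gt0 totals_gt0 bmss _ (leqnn n).
- have [def rvalE] := rval_steady n_gt0 rates_gt0 Ebar_gt0 totals_gt0 bmss.
  have [_ PE] := rfun_reduced_eval Ebar def r2_neq0 cop rE.
  by rewrite /root /P PE rvalE subrr mulr0.
move=> s s_gt0 Ps; rewrite leNgt; apply/negP => s_lt.
have [def rval_lt] := rval_below n_gt0 rates_gt0 Ebar_gt0 totals_gt0 bmss s_gt0 s_lt.
have [r2s_neq0 PE] := rfun_reduced_eval Ebar def r2_neq0 cop rE.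
by move: Ps; rewrite /root /P PE mulf_eq0 (negbTE r2s_neq0) subr_eq0 gt_eqF.
Qed.
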